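(* Let $K$ be an algebraically closed field of characteristic $0$ and let $X$ be a finite set of distinct points in $\mathbb{P}^1\times\mathbb{P}^1\times\mathbb{P}^1$ over $K$. Let $t_1=|\pi_1(X)|$ and $t_2=|\pi_2(X)|$. For every integer $k\ge 0$, \[ r_{k+1}(X)=d_{t_1-1,t_2-1,k}-d_{t_1-1,t_2-1,k+1}=2H_X(t_1-1,t_2-1,k)-H_X(t_1-1,t_2-1,k-1)-H_X(t_1-1,t_2-1,k+1). \]
   Context: Let $R=K[x_0,x_1,y_0,y_1,z_0,z_1]$ be $\mathbb{N}^3$-graded with $\deg x_i=(1,0,0)$, $\deg y_i=(0,1,0)$, $\deg z_i=(0,0,1)$. For a point $P=[a_0:a_1]\times[b_0:b_1]\times[c_0:c_1]$, $I(P)=(a_1x_0-a_0x_1,\,b_1y_0-b_0y_1,\,c_1z_0-c_0z_1)$, and for $X=\{P_1,\dots,P_s\}$, $I(X)=\bigcap_i I(P_i)$. The Hilbert function is $H_X(i,j,k)=\dim_K R_{i,j,k}-\dim_K I(X)_{i,j,k}$ for $(i,j,k)\in\mathbb{N}^3$, and $H_X(a,b,c)=0$ if some coordinate of $(a,b,c)$ is negative. $\pi_i:\mathbb{P}^1\times\mathbb{P}^1\times\mathbb{P}^1\to\mathbb{P}^1$ is the projection to the $i$-th factor. A line of type $(1,1,0)$ is the subvariety defined by an ideal $(L,L')$ with $L\in R_{1,0,0}$, $L'\in R_{0,1,0}$ nonzero. For $i\ge1$, $r_i(X)$ is the number of lines of type $(1,1,0)$ containing exactly $i$ points of $X$. Set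 $d_{i,j,k}=H_X(i,j,k)-H_X(i,j,k-1)$. *)

From HB Require Import structures.
From mathcomp Require Import all_boot all_order all_algebra.
From mathcomp Require Import mpoly.
From Stdlib Require Import ClassicalEpsilon.
Set Implicit Arguments. Unset Strict Implicit. Unset Printing Implicit Defensive.
Import Order.TTheory GRing.Theory Num.Theory.
Local Open Scope ring_scope.

Section P1P1P1.
Variable K : fieldType.

Definition asb (P : Prop) : bool :=
  if excluded_middle_informative P then true else false.

Definition Rpoly := {mpoly K[6]}.
Definition var (i : nat) : Rpoly := 'X_(inord i : 'I_6).
(* x0 = var 0, x1 = var 1, y0 = var 2, y1 = var 3, z0 = var 4, z1 = var 5 *)

(* homogeneous coordinates of a point of P^1 : a nonzero pair [a0:a1] *)
Definition proj_eq (u v : K * K) : bool := u.1 * v.2 == u.2 * v.1.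
Definition nz (u : K * K) : bool := (u.1 != 0) || (u.2 != 0).

(* a point [a0:a1] x [b0:b1] x [c0:c1] of P^1 x P^1 x P^1, stored as ((a,b),c) *)
Definition pt := ((K * K) * (K * K) * (K * K))%type.
Definition valid_pt (P : pt) : bool := [&& nz P.1.1, nz P.1.2 & nz P.2].
Definition pt_eq (P Q : pt) : bool :=
  [&& proj_eq P.1.1 Q.1.1, proj_eq P.1.2 Q.1.2 & proj_eq P.2 Q.2].

Definition LP1 (P : pt) : Rpoly := P.1.1.2 *: var 0 - P.1.1.1 *: var 1.
Definition LP2 (P : pt) : Rpoly := P.1.2.2 *: var 2 - P.1.2.1 *: var 3.
Definition LP3 (P : pt) : Rpoly := P.2.2 *: var 4 - P.2.1 *: var 5.
Definition in_IP (P : pt) (f : Rpoly) : Prop :=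
  exists g1 g2 g3 : Rpoly, f = g1 * LP1 P + g2 * LP2 P + g3 * LP3 P.
Definition in_IX (X : seq pt) (f : Rpoly) : Prop :=
  forall P, P \in X -> in_IP P f.

(* R_{i,j,k}: K-span of the monomials x0^a x1^(i-a) y0^b y1^(j-b) z0^c z1^(k-c);
   an element is given by its coefficient vector in {ffun mon_idx i j k -> K} *)
Definition mon_idx (i j k : nat) : finType := ('I_i.+1 * 'I_j.+1 * 'I_k.+1)%type.
Definition mono (i j k : nat) (t : mon_idx i j k) : Rpoly :=
  var 0 ^+ t.1.1 * var 1 ^+ (i - t.1.1) * var 2 ^+ t.1.2 * var 3 ^+ (j - t.1.2)
  * var 4 ^+ t.2 * var 5 ^+ (k - t.2).
Definition poly_of (i j k : nat) (c : {ffun mon_idx i j k -> K}) : Rpoly :=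
  \sum_(t : mon_idx i j k) c t *: mono t.

Definition lin_indep (V : lmodType K) (n : nat) (v : 'I_n -> V) : Prop :=
  forall c : 'I_n -> K, \sum_(l < n) c l *: v l = 0 -> forall l, c l = 0.
(* dimension: largest n admitting n linearly independent vectors in S;
   any such n is at most #|T| (= dim of the ambient space), so the bound
   in the max is not a restriction *)
Definition sdim (T : finType) (S : {ffun T -> K^o} -> Prop) : nat :=
  \max_(n < #|T|.+1 | asb (exists v : 'I_n -> {ffun T -> K^o},
                            (forall l, S (v l)) /\ lin_indep v)) n.

Definition HX (X : seq pt) (i j k : nat) : nat :=
  sdim (fun _ : {ffun mon_idx i j k -> K^o} => True)
  - sdim (fun c : {ffun mon_idx i j k -> K^o} => in_IX X (poly_of c)).
Definition HXz (X : seq pt) (i j k : int) : int :=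
  match i, j, k with
  | Posz i, Posz j, Posz k => (HX X i j k)%:Z
  | _, _, _ => 0
  end.

Fixpoint ncls (s : seq (K * K)) : nat :=
  match s with
  | [::] => 0
  | u :: s' => (~~ has (proj_eq u) s') + ncls s'
  end.
Definition card_pi1 (X : seq pt) : nat := ncls (map (fun P => P.1.1) X).
Definition card_pi2 (X : seq pt) : nat := ncls (map (fun P => P.1.2) X).

(* lines of type (1,1,0): V(L, L'), L = l0 x0 + l1 x1, L' = m0 y0 + m1 y1,
   both nonzero; stored as ((l0,l1),(m0,m1)). Two such lines are the same
   subvariety iff L and L' are respectively proportional. *)
Definition line := ((K * K) * (K * K))%type.
Definition valid_line (l : line) : bool := nz l.1 && nz l.2.
Definition same_line (l l' : line) : bool := proj_eq l.1 l'.1 && proj_eq l.2 l'.2.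
Definition on_line (l : line) (P : pt) : bool :=
  (l.1.1 * P.1.1.1 + l.1.2 * P.1.1.2 == 0) && (l.2.1 * P.1.2.1 + l.2.2 * P.1.2.2 == 0).
Definition npts (X : seq pt) (l : line) : nat := count (on_line l) X.

Definition r_is (X : seq pt) (i n : nat) : Prop :=
  exists s : seq line,
    [/\ size s = n,
        all (fun l => valid_line l && (npts X l == i)) s,
        pairwise (fun l l' => ~~ same_line l l') s &
        forall l, valid_line l -> npts X l = i -> has (same_line l) s].

End P1P1P1.

From HB Require Import structures.
From mathcomp Require Import all_boot all_order all_algebra.
From mathcomp Require Import mpoly.
From mathcomp Require Import ring zify.
From Stdlib Require Import ClassicalEpsilon.
Set Implicit Arguments. Unset Strict Implicit. Unset Printing Implicit Defensive.
Import Order.TTheory GRing.Theory Num.Theory.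
Local Open Scope ring_scope.

(* H_X(i,j,k) is the rank of the matrix evaluating the monomials of tridegree (i,j,k) at the
   points of X.  Group the points by their first two coordinates, i.e. by the line of type
   (1,1,0) through them.  For i = t1 - 1 and j = t2 - 1, products of linear forms separate the
   t1 first and the t2 second coordinates, while binary forms of degree k separate any k+1
   points of P^1 and any k+1 such points give an invertible Vandermonde-type matrix; so a line
   carrying c points contributes exactly min(k+1, c) to the rank.  Hence H_X(t1-1,t2-1,k) is
   the sum over the lines of min(k+1, c), and its second difference in k counts the lines with
   exactly k+1 points.  Nothing is used about K beyond its being a field. *)

Lemma asbP (P : Prop) : reflect P (asb P).
Proof. by rewrite /asb; case: excluded_middle_informative => h; constructor. Qed.

Lemma count_index (T : eqType) (s : seq T) m : uniq s ->
  count (fun x => (index x s < m)%N) s = minn m (size s).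
Proof.
elim: s m => [|y s IH] m /=; first by rewrite minn0.
case/andP=> ys us; rewrite eqxx.
rewrite (@eq_in_count _ _ (fun x => (0 < m)%N && (index x s < m.-1)%N)); last first.
  move=> x xs; have -> : (y == x) = false by apply: contraNF ys => /eqP ->.
  by case: m.
case: m => [|m] /=; first by rewrite count_pred0.
by rewrite IH // minnSS add1n.
Qed.

Lemma size_sum_count (A B : eqType) (f : A -> B) (L : seq B) (s : seq A) :
  uniq L -> {subset map f s <= L} ->
  size s = \sum_(l <- L) count (fun x => f x == l) s.
Proof.
move=> uL; elim: s => [|x s IH] fsL /=; first by rewrite big1_seq.
rewrite big_split /= -IH; last by move=> y ys; apply: fsL; rewrite inE ys orbT.
have -> : \sum_(l <- L) (f x == l : nat) = count (pred1 (f x)) L.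
  by rewrite -sumn_count sumnE big_map; apply: eq_bigr => l _; rewrite eq_sym.
by rewrite count_uniq_mem // fsL ?inE ?eqxx // add1n.
Qed.

Lemma undup_map_gt0 (A B : eqType) (f : A -> B) (s : seq A) :
  s != [::] -> (0 < size (undup (map f s)))%N.
Proof.
case: s => // x s _; rewrite -has_predT; apply/hasP.
by exists (f x); rewrite // mem_undup map_f ?mem_head.
Qed.

Lemma count_eq_minn_second_difference (B : Type) (L : seq B) (c : B -> nat) k :
  (count (fun b => c b == k.+1) L)%:Z =
  2 * (\sum_(b <- L) minn k.+1 (c b))%:Z - (\sum_(b <- L) minn k (c b))%:Z
  - (\sum_(b <- L) minn k.+2 (c b))%:Z.
Proof.
elim: L => [|b L IH]; first by rewrite !big_nil.
by rewrite /= !big_cons !PoszD IH; case: eqP => [->|] /=; lia.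
Qed.

Lemma row_free_separated (K : fieldType) m n (A : 'M[K]_(m, n)) :
  (forall r, exists e : 'cV_n, forall r', ((row r' A *m e) 0 0 == 0) = (r' != r)) ->
  row_free A.
Proof.
move=> sepA; apply: inj_row_free => w wA0; apply/rowP => r; rewrite mxE.
have [e He] := sepA r.
have : (w *m A *m e) 0 0 = \sum_r' w 0 r' * (row r' A *m e) 0 0.
  rewrite [w *m A]mulmx_sum_row mulmx_suml summxE; apply: eq_bigr => r0 _.
  by rewrite -scalemxAl mxE.
rewrite wA0 mul0mx mxE (bigD1 r) //= big1 ?addr0; last first.
  by move=> r' r'r; move: (He r'); rewrite r'r => /eqP ->; rewrite mulr0.
by move/esym/eqP; rewrite mulf_eq0 He eqxx orbF => /eqP.
Qed.

Section SubspaceDimension.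
Variables (K : fieldType) (T : finType).
Local Notation n := #|T|.

Definition ffun_row (v : {ffun T -> K^o}) : 'rV[K]_n := \row_j v (enum_val j).
Definition row_ffun (r : 'rV[K]_n) : {ffun T -> K^o} := [ffun t => r 0 (enum_rank t)].

Lemma ffun_rowK : cancel ffun_row row_ffun.
Proof. by move=> v; apply/ffunP => t; rewrite ffunE mxE enum_rankK. Qed.

Lemma row_ffunK : cancel row_ffun ffun_row.
Proof. by move=> r; apply/rowP => j; rewrite mxE ffunE enum_valK. Qed.

Fact ffun_row_is_linear : semilinear ffun_row.
Proof. by split=> [a u|u v]; apply/rowP => j; rewrite !mxE !ffunE. Qed.
HB.instance Definition _ :=
  GRing.isSemilinear.Build K {ffun T -> K^o} 'rV[K]_n _ ffun_row ffun_row_is_linear.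

Lemma lin_indep_row_free m (v : 'I_m -> {ffun T -> K^o}) :
  lin_indep v -> row_free (\matrix_(l < m) ffun_row (v l)).
Proof.
move=> iv; apply: inj_row_free => w wV0; apply/rowP => l; rewrite mxE.
apply: (iv (fun l => w 0 l)); apply: (can_inj ffun_rowK).
rewrite linear_sum linear0 -[RHS]wV0 mulmx_sum_row.
by apply: eq_bigr => i _; rewrite linearZ rowK.
Qed.

Lemma row_free_lin_indep m (B : 'M[K]_(m, n)) :
  row_free B -> lin_indep (fun l => row_ffun (row l B)).
Proof.
move=> fB c hc; have : (\row_l c l) *m B = 0.
  rewrite mulmx_sum_row -[RHS](linear0 ffun_row) -hc linear_sum.
  by apply: eq_bigr => i _; rewrite linearZ /= row_ffunK mxE.
by move=> /eqP; rewrite mulmx_free_eq0 // => /eqP /rowP h l; have := h l; rewrite !mxE.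
Qed.

Lemma sdim_rank (S : {ffun T -> K^o} -> Prop) p (U : 'M[K]_(p, n)) :
  (forall v, S v <-> (ffun_row v <= U)%MS) -> sdim S = \rank U.
Proof.
move=> SU; apply/eqP; rewrite eqn_leq; apply/andP; split.
  apply/bigmax_leqP => m /asbP [v [Sv /lin_indep_row_free fV]].
  rewrite -(eqP fV); apply: mxrankS; apply/row_subP => i.
  by rewrite rowK; apply/SU.
have rU : (\rank U < n.+1)%N by rewrite ltnS rank_leq_col.
apply: (@leq_bigmax_cond _ _ _ (Ordinal rU)); apply/asbP.
exists (fun l => row_ffun (row l (row_base U))); split.
  move=> l; apply/SU; rewrite row_ffunK.
  by rewrite (submx_trans (row_sub _ _)) ?eq_row_base.
exact/row_free_lin_indep/row_base_free.
Qed.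

End SubspaceDimension.

Section ProjectiveLine.
Variable K : fieldType.
Implicit Types (u v a : K * K).

Definition pnorm u : K * K := if u.1 == 0 then (0, 1) else (1, u.2 / u.1).
Definition pnormal u := pnorm u == u.

Lemma pnorm_nz u : nz (pnorm u).
Proof. by rewrite /pnorm /nz; case: ifP => _ /=; rewrite oner_eq0 ?orbT. Qed.

Lemma pnormK u : pnorm (pnorm u) = pnorm u.
Proof.
rewrite /pnorm; have [u1|u1] := eqVneq u.1 0 => /=; first by rewrite eqxx.
by rewrite oner_eq0 divr1.
Qed.

Lemma pnorm_pnormal u : pnormal (pnorm u).
Proof. by rewrite /pnormal pnormK. Qed.

Lemma pnormal_nz u : pnormal u -> nz u.
Proof. by move/eqP <-; apply: pnorm_nz. Qed.

Lemma proj_eq_pnorm u v : nz u -> nz v -> proj_eq u v = (pnorm u == pnorm v).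
Proof.
rewrite /nz /proj_eq /pnorm.
have [u1|u1] := eqVneq u.1 0; have [v1|v1] := eqVneq v.1 0 => /= nu nv.
- by rewrite u1 v1 mul0r mulr0 !eqxx.
- rewrite u1 mul0r xpair_eqE eq_sym mulf_eq0 (negbTE nu) (negbTE v1).
  by rewrite [0 == 1]eq_sym oner_eq0.
- by rewrite v1 mulr0 xpair_eqE mulf_eq0 (negbTE nv) (negbTE u1) oner_eq0.
rewrite xpair_eqE eqxx /=; apply/eqP/eqP => [uv|].
  apply: (@mulIf _ (u.1 * v.1)); first by rewrite mulf_neq0.
  by rewrite !mulrA divfK // mulrAC divfK // -uv; ring.
move/(congr1 (fun z => z * (u.1 * v.1))) => /=.
by rewrite !mulrA divfK // mulrAC divfK // => ->; ring.
Qed.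

Lemma proj_eq_pnormal u v : pnormal u -> pnormal v -> proj_eq u v = (u == v).
Proof.
move=> nu nv; rewrite proj_eq_pnorm ?pnormal_nz //.
by rewrite (eqP nu) (eqP nv).
Qed.

Lemma pnorm_scale u : nz u ->
  exists2 mu : K, mu != 0 & u = (mu * (pnorm u).1, mu * (pnorm u).2).
Proof.
rewrite /nz /pnorm; have [u1|u1] := eqVneq u.1 0 => /= nu.
  by exists u.2; rewrite // mulr0 mulr1 -u1; case: u {u1 nu}.
by exists u.1; rewrite // mulr1 mulrC divfK //; case: u {u1 nu}.
Qed.

Lemma ncls_pnorm (s : seq (K * K)) : all (@nz K) s ->
  ncls s = size (undup (map pnorm s)).
Proof.
elim: s => [//|u s IH] /= /andP [nu ns].
have -> : has (proj_eq u) s = (pnorm u \in map pnorm s).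
  apply/hasP/mapP => [] [v vs].
    by rewrite proj_eq_pnorm ?(allP ns v vs) // => /eqP; exists v.
  by move=> uv; exists v; rewrite // proj_eq_pnorm ?(allP ns v vs) ?uv.
by case: (pnorm u \in map pnorm s); rewrite /= IH.
Qed.

End ProjectiveLine.

Section BinaryForms.
Variable K : fieldType.
Implicit Types (u a l : K * K) (f : nat -> K).

Definition bmon (d : nat) a (p : nat) : K := a.1 ^+ p * a.2 ^+ (d - p).
Definition bform (d : nat) f a : K := \sum_(p < d.+1) f p * bmon d a p.
Definition lform l a : K := l.1 * a.1 + l.2 * a.2.
Definition annih u : K * K := (u.2, - u.1).
Definition dual_unit a : K * K := if a.1 != 0 then (a.1^-1, 0) else (0, a.2^-1).

Lemma bmon_scale d (mu : K) a p : (p <= d)%N ->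
  bmon d (mu * a.1, mu * a.2) p = mu ^+ d * bmon d a p.
Proof. by move=> pd; rewrite /bmon /= !exprMn -{3}(subnKC pd) exprD; ring. Qed.

Lemma lform_annih_eq0 u a : (lform (annih u) a == 0) = proj_eq a u.
Proof. by rewrite /lform /proj_eq /= mulNr subr_eq0 [u.2 * _]mulrC [u.1 * _]mulrC. Qed.

Lemma annih_nz u : nz u -> nz (annih u).
Proof. by rewrite /nz /= oppr_eq0 orbC. Qed.

Lemma proj_eq_annih u v : proj_eq (annih u) (annih v) = proj_eq u v.
Proof. by rewrite /proj_eq /= mulrN mulNr eqr_opp eq_sym. Qed.

Lemma lform_dual_unit a : nz a -> lform (dual_unit a) a = 1.
Proof.
rewrite /nz /lform /dual_unit; case: eqP => [->|a1] /= na.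
  by rewrite mul0r add0r mulVf.
by rewrite mulVf ?mul0r ?addr0 //; apply/eqP.
Qed.

Lemma prod_lform_bform (ls : seq (K * K)) :
  exists f, forall a, bform (size ls) f a = \prod_(l <- ls) lform l a.
Proof.
elim: ls => [|l ls [f hf]].
  by exists (fun _ => 1) => a; rewrite /bform big_ord1 big_nil /bmon !expr0 !mulr1.
set d := size ls.
exists (fun p => l.1 * (if p is p'.+1 then f p' else 0) +
                 l.2 * (if (p <= d)%N then f p else 0)) => a.
rewrite big_cons -hf /bform /= -/d.
under eq_bigr do rewrite mulrDl.
rewrite big_split /= [X in _ + X]big_ord_recr /= ltnn mulr0 mul0r addr0.
rewrite big_ord_recl /= mulr0 mul0r add0r.
rewrite /lform mulrDl !mulr_sumr; congr (_ + _); apply: eq_bigr => p _.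
  by rewrite /bmon /bump /= add1n subSS exprS; ring.
by rewrite leq_ord /bmon subSn ?leq_ord // exprS; ring.
Qed.

(* Product of the forms [annih w], w <> u, padded by powers of [dual_unit u]. *)
Lemma bform_separating (zs : seq (K * K)) u d :
  uniq zs -> {in zs, forall w, pnormal w} -> u \in zs -> (size zs <= d.+1)%N ->
  exists f, forall a, a \in zs -> (bform d f a == 0) = (a != u).
Proof.
move=> uzs nzs uz szs.
set ls := map annih (rem u zs) ++ nseq (d.+1 - size zs) (dual_unit u).
have [f hf] := prod_lform_bform ls.
have sls : size ls = d.
  have zs0 : (0 < size zs)%N by case: (zs) uz.
  rewrite size_cat size_map size_rem // size_nseq.
  by case: (size zs) zs0 szs => // n _ /=; lia.
exists f => a az; rewrite -{1}sls hf prodf_seq_eq0 has_cat has_map has_nseq.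
have -> : has (fun w => lform (annih w) a == 0) (rem u zs) = (a != u).
  apply/hasP/idP => [[w] | au].
    rewrite mem_rem_uniq // inE lform_annih_eq0 => /andP [wu wz].
    by rewrite proj_eq_pnormal ?nzs // => /eqP ->.
  by exists a; rewrite ?mem_rem_uniq ?inE ?au // lform_annih_eq0 proj_eq_pnormal ?nzs.
have [->|//] := eqVneq a u.
by rewrite /= lform_dual_unit ?pnormal_nz ?nzs // oner_eq0 andbF.
Qed.

End BinaryForms.

Section PointIdeal.
Variable K : fieldType.
Implicit Types (P : pt K) (f g : Rpoly K).

Definition mon_eval i j k (t : mon_idx i j k) P : K :=
  bmon i P.1.1 t.1.1 * bmon j P.1.2 t.1.2 * bmon k P.2 t.2.
Definition form_eval i j k P (v : {ffun mon_idx i j k -> K}) : K :=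
  \sum_t v t * mon_eval t P.

Definition coords P (j : 'I_6) : K :=
  nth 0 [:: P.1.1.1; P.1.1.2; P.1.2.1; P.1.2.2; P.2.1; P.2.2] j.

Lemma meval_var P i : (i < 6)%N ->
  (var K i).@[coords P] = nth 0 [:: P.1.1.1; P.1.1.2; P.1.2.1; P.1.2.2; P.2.1; P.2.2] i.
Proof. by move=> i6; rewrite /var mevalXU /coords inordK. Qed.

Lemma mevalXn (v : 'I_6 -> K) f n : (f ^+ n).@[v] = f.@[v] ^+ n.
Proof. exact: rmorphXn. Qed.

Lemma meval_mono P i j k (t : mon_idx i j k) : (mono K t).@[coords P] = mon_eval t P.
Proof. by rewrite /mono !mevalM !mevalXn !meval_var //= /mon_eval /bmon !mulrA. Qed.

Lemma meval_poly_of P i j k (v : {ffun mon_idx i j k -> K}) :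
  (poly_of v).@[coords P] = form_eval P v.
Proof.
rewrite /poly_of raddf_sum; apply: eq_bigr => t _.
by rewrite -meval_mono; exact: mevalZ.
Qed.

Lemma in_IP_meval P f : in_IP P f -> f.@[coords P] = 0.
Proof.
move=> [g1 [g2 [g3 ->]]].
rewrite !mevalD !mevalM /LP1 /LP2 /LP3 !mevalB !mevalZ !meval_var //=.
by rewrite ![_.2 * _.1]mulrC !subrr !mulr0 !addr0.
Qed.

Section Congruence.
Variable P : pt K.
Local Notation I := (in_IP P).

Lemma in_IP0 : I 0.
Proof. by exists 0, 0, 0; rewrite !mul0r !addr0. Qed.

Lemma in_IPD f g : I f -> I g -> I (f + g).
Proof.
move=> [a1 [a2 [a3 ->]]] [b1 [b2 [b3 ->]]].
by exists (a1 + b1), (a2 + b2), (a3 + b3); ring.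
Qed.

Lemma in_IPMl h f : I f -> I (h * f).
Proof. by move=> [a1 [a2 [a3 ->]]]; exists (h * a1), (h * a2), (h * a3); ring. Qed.

Lemma in_IP_sum (J : finType) (F : J -> Rpoly K) : (forall x, I (F x)) -> I (\sum_x F x).
Proof. by move=> IF; apply: (big_ind I); [apply: in_IP0 | apply: in_IPD |]. Qed.

Definition eqmodI f g := I (f - g).

Lemma eqmodIM f1 g1 f2 g2 : eqmodI f1 g1 -> eqmodI f2 g2 -> eqmodI (f1 * f2) (g1 * g2).
Proof.
rewrite /eqmodI => e1 e2; have -> : f1 * f2 - g1 * g2 = f2 * (f1 - g1) + g1 * (f2 - g2) by ring.
by apply: in_IPD; apply: in_IPMl.
Qed.

Lemma eqmodIX f g n : eqmodI f g -> eqmodI (f ^+ n) (g ^+ n).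
Proof.
move=> e; elim: n => [|n IH]; first by rewrite !expr0 /eqmodI subrr; apply: in_IP0.
by rewrite !exprS; apply: eqmodIM.
Qed.

(* Modulo [a.2 x0 - a.1 x1], both x0 and x1 are multiples of the linear form [unit_form a]. *)
Definition unit_form (a : K * K) i0 i1 : Rpoly K :=
  (dual_unit a).1%:MP * var K i0 + (dual_unit a).2%:MP * var K i1.

Lemma eqmodI_unit_form (a : K * K) i0 i1 : nz a ->
  I (a.2 *: var K i0 - a.1 *: var K i1) ->
  eqmodI (var K i0) (a.1%:MP * unit_form a i0 i1) /\
  eqmodI (var K i1) (a.2%:MP * unit_form a i0 i1).
Proof.
move=> /lform_dual_unit; rewrite /lform /unit_form -!mul_mpolyC.
set w := dual_unit a => wa IL.
have wa1 : a.1%:MP * w.1%:MP + a.2%:MP * w.2%:MP = 1 :> Rpoly K.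
  by rewrite -!mpolyCM -mpolyCD [a.1 * _]mulrC [a.2 * _]mulrC wa.
split; rewrite /eqmodI.
  have -> : var K i0 - a.1%:MP * (w.1%:MP * var K i0 + w.2%:MP * var K i1)
     = w.2%:MP * (a.2%:MP * var K i0 - a.1%:MP * var K i1)
     + (1 - (a.1%:MP * w.1%:MP + a.2%:MP * w.2%:MP)) * var K i0 by ring.
  by rewrite wa1 subrr mul0r addr0; apply: in_IPMl.
have -> : var K i1 - a.2%:MP * (w.1%:MP * var K i0 + w.2%:MP * var K i1)
   = - w.1%:MP * (a.2%:MP * var K i0 - a.1%:MP * var K i1)
   + (1 - (a.1%:MP * w.1%:MP + a.2%:MP * w.2%:MP)) * var K i1 by ring.
by rewrite wa1 subrr mul0r addr0; apply: in_IPMl.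
Qed.

Definition unit_mono i j k : Rpoly K :=
  unit_form P.1.1 0 1 ^+ i * unit_form P.1.2 2 3 ^+ j * unit_form P.2 4 5 ^+ k.

Lemma eqmodI_mono i j k (t : mon_idx i j k) : valid_pt P ->
  eqmodI (mono K t) ((mon_eval t P)%:MP * unit_mono i j k).
Proof.
case/and3P=> n1 n2 n3.
have IL1 : I (LP1 P) by exists 1, 0, 0; ring.
have IL2 : I (LP2 P) by exists 0, 1, 0; ring.
have IL3 : I (LP3 P) by exists 0, 0, 1; ring.
have [e0 e1] := eqmodI_unit_form n1 IL1.
have [e2 e3] := eqmodI_unit_form n2 IL2.
have [e4 e5] := eqmodI_unit_form n3 IL3.
have split_pow (M : Rpoly K) n (p : 'I_n.+1) : M ^+ n = M ^+ p * M ^+ (n - p).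
  by rewrite -exprD subnKC // -ltnS.
have -> : (mon_eval t P)%:MP * unit_mono i j k =
  (P.1.1.1%:MP * unit_form P.1.1 0 1) ^+ t.1.1 *
  (P.1.1.2%:MP * unit_form P.1.1 0 1) ^+ (i - t.1.1) *
  (P.1.2.1%:MP * unit_form P.1.2 2 3) ^+ t.1.2 *
  (P.1.2.2%:MP * unit_form P.1.2 2 3) ^+ (j - t.1.2) *
  (P.2.1%:MP * unit_form P.2 4 5) ^+ t.2 * (P.2.2%:MP * unit_form P.2 4 5) ^+ (k - t.2).
  rewrite /mon_eval /bmon /unit_mono !mpolyCM !(rmorphXn (@mpolyC 6 K)) !exprMn.
  by rewrite (split_pow _ _ t.1.1) (split_pow _ _ t.1.2) (split_pow _ _ t.2); ring.
by rewrite /mono; repeat apply: eqmodIM; apply: eqmodIX.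
Qed.

Lemma in_IP_poly_of i j k (v : {ffun mon_idx i j k -> K}) : valid_pt P ->
  I (poly_of v) <-> form_eval P v = 0.
Proof.
move=> vP; split; first by move/in_IP_meval; rewrite meval_poly_of.
move=> v0; suff : eqmodI (poly_of v) ((form_eval P v)%:MP * unit_mono i j k).
  by rewrite /eqmodI v0 mpolyC0 mul0r subr0.
rewrite /eqmodI; have -> : poly_of v - (form_eval P v)%:MP * unit_mono i j k =
          \sum_t v t *: (mono K t - (mon_eval t P)%:MP * unit_mono i j k).
  rewrite /form_eval raddf_sum mulr_suml /poly_of -sumrB; apply: eq_bigr => t _.
  rewrite scalerBr; congr (_ - _).
  rewrite -[v t *: _]mul_mpolyC mulrA; congr (_ * _); exact: mpolyCM.
by apply: in_IP_sum => t; rewrite -mul_mpolyC; apply/in_IPMl/eqmodI_mono.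
Qed.

End Congruence.
End PointIdeal.

Section PointNormalForm.
Variable K : fieldType.
Implicit Types P : pt K.

Definition pt_pnorm P : pt K := ((pnorm P.1.1, pnorm P.1.2), pnorm P.2).
Definition pnormal_pt P := [&& pnormal P.1.1, pnormal P.1.2 & pnormal P.2].

Definition bases (Y : seq (pt K)) := undup (map fst Y).
Definition fiber_size (Y : seq (pt K)) b := count (fun P => P.1 == b) Y.

Lemma pt_pnorm_pnormal P : pnormal_pt (pt_pnorm P).
Proof. by rewrite /pnormal_pt /= !pnorm_pnormal. Qed.

Lemma mon_eval_pt_pnorm P i j k : valid_pt P ->
  exists2 mu : K, mu != 0 & forall t : mon_idx i j k,
    mon_eval t P = mu * mon_eval t (pt_pnorm P).
Proof.
case/and3P=> n1 n2 n3.
have [m1 m10 e1] := pnorm_scale n1.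
have [m2 m20 e2] := pnorm_scale n2.
have [m3 m30 e3] := pnorm_scale n3.
exists (m1 ^+ i * m2 ^+ j * m3 ^+ k); first by rewrite !mulf_neq0 // expf_neq0.
move=> t; rewrite /mon_eval [in LHS]e1 [in LHS]e2 [in LHS]e3 /=.
by rewrite !bmon_scale; [ring | rewrite -ltnS ..].
Qed.

Lemma form_eval_pt_pnorm_eq0 P i j k (v : {ffun mon_idx i j k -> K}) : valid_pt P ->
  (form_eval P v == 0) = (form_eval (pt_pnorm P) v == 0).
Proof.
move=> vP; have [mu mu0 emu] := mon_eval_pt_pnorm i j k vP.
have -> : form_eval P v = mu * form_eval (pt_pnorm P) v.
  by rewrite /form_eval mulr_sumr; apply: eq_bigr => t _; rewrite emu; ring.
by rewrite mulf_eq0 (negbTE mu0).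
Qed.

End PointNormalForm.

Section EvaluationRank.
Variables (K : fieldType) (i j k : nat).
Local Notation T := (mon_idx i j k).
Local Notation n := #|T|.
Implicit Types (P : pt K) (S : seq (pt K)).

Definition eval_row P : 'rV[K]_n := \row_c mon_eval (enum_val c) P.
Definition pt0 : pt K := ((0, 0), (0, 0), (0, 0)).
Definition eval_mx S : 'M[K]_(size S, n) := \matrix_(r < size S) eval_row (nth pt0 S r).

Lemma eval_row_sub S P : P \in S -> (eval_row P <= eval_mx S)%MS.
Proof.
move=> PS; have iP : (index P S < size S)%N by rewrite index_mem.
have -> : eval_row P = row (Ordinal iP) (eval_mx S) by rewrite rowK nth_index.
exact: row_sub.
Qed.

Lemma eval_mxS S S' : {subset S <= S'} -> (eval_mx S <= eval_mx S')%MS.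
Proof. by move=> SS'; apply/row_subP => r; rewrite rowK eval_row_sub ?SS' ?mem_nth. Qed.

Lemma eval_row_mul_col P (f : T -> K) :
  (eval_row P *m \col_c f (enum_val c)) 0 0 = \sum_t mon_eval t P * f t.
Proof.
rewrite mxE [RHS](reindex (fun c : 'I_n => enum_val c)) /=; last first.
  by exists (fun t => enum_rank t) => t _; rewrite ?enum_rankK ?enum_valK.
by apply: eq_bigr => c _; rewrite !mxE.
Qed.

Definition tensor3 (f1 f2 f3 : nat -> K) (t : T) : K := f1 t.1.1 * f2 t.1.2 * f3 t.2.

Lemma sum_mon_eval_tensor P (f1 f2 f3 : nat -> K) :
  \sum_(t : T) mon_eval t P * tensor3 f1 f2 f3 t =
  bform i f1 P.1.1 * bform j f2 P.1.2 * bform k f3 P.2.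
Proof.
transitivity (\sum_(a : 'I_i.+1) \sum_(b : 'I_j.+1) \sum_(c : 'I_k.+1)
   mon_eval (((a, b), c) : T) P * (f1 a * f2 b * f3 c)).
  by rewrite pair_bigA [RHS]pair_bigA.
rewrite /bform !mulr_suml; apply: eq_bigr => a _.
rewrite -mulrA mulr_suml mulr_sumr; apply: eq_bigr => b _.
rewrite !mulr_sumr; apply: eq_bigr => c _.
by rewrite /mon_eval /tensor3 /=; ring.
Qed.

Lemma bmon_mx_free (zs : seq (K * K)) : size zs = k.+1 -> uniq zs ->
  {in zs, forall u, pnormal u} ->
  row_free (\matrix_(r < k.+1, s < k.+1) bmon k (nth 0 zs r) s).
Proof.
move=> szs uzs nzs; apply: row_free_separated => r.
have rz : (r < size zs)%N by rewrite szs.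
have [f hf] := bform_separating uzs nzs (mem_nth 0 rz) (eq_leq szs).
exists (\col_s f s) => r'; have r'z : (r' < size zs)%N by rewrite szs.
rewrite mxE (eq_bigr (fun s : 'I_k.+1 => f s * bmon k (nth 0 zs r') s)); last first.
  by move=> s _; rewrite !mxE mulrC.
by rewrite hf ?mem_nth // nth_uniq.
Qed.

(* On a fiber the evaluation rows are [bmon] rows in z tensored with a fixed vector, and any
   k+1 distinct z-values give an invertible matrix of [bmon] rows. *)
Lemma eval_row_sub_fiber (Q F : seq (pt K)) P : size F = k.+1 -> uniq (map snd F) ->
  {in F, forall P', pnormal P'.2 /\ P'.1 = P.1} -> {subset F <= Q} ->
  (eval_row P <= eval_mx Q)%MS.
Proof.
move=> sF uF hF FQ.
set G := \matrix_(r < k.+1, s < k.+1) bmon k (nth 0 (map snd F) r) s.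
have GU : G \in unitmx.
  rewrite -row_free_unit bmon_mx_free ?size_map // => u /mapP [P' P'F ->].
  by case: (hF P' P'F).
set lam := \row_(s < k.+1) bmon k P.2 s *m invmx G.
have -> : eval_row P = \sum_(r < k.+1) lam 0 r *: eval_row (nth pt0 F r).
  apply/rowP => c; rewrite summxE !mxE /mon_eval.
  have -> : bmon k P.2 (enum_val c).2 = (lam *m G) 0 (enum_val c).2.
    by rewrite mulmxKV // mxE.
  rewrite mxE mulr_sumr; apply: eq_bigr => r _.
  have rF : nth pt0 F r \in F by rewrite mem_nth ?sF.
  have [_ e] := hF _ rF.
  by rewrite !mxE /mon_eval e (nth_map pt0) ?sF //; ring.
by apply: summx_sub => r _; apply/scalemx_sub/eval_row_sub/FQ/mem_nth; rewrite sF.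
Qed.

Definition same_base P0 P := P.1 == P0.1.

Variables (U1 U2 : seq (K * K)).
Hypotheses (uU1 : uniq U1) (uU2 : uniq U2).
Hypotheses (sU1 : size U1 = i.+1) (sU2 : size U2 = j.+1).
Hypotheses (nU1 : {in U1, forall u, pnormal u}) (nU2 : {in U2, forall u, pnormal u}).

Definition adapted P := [&& pnormal_pt P, P.1.1 \in U1 & P.1.2 \in U2].

(* The product of a form in x separating P0.1.1 within U1, one in y separating P0.1.2 within U2
   and one in z separating P0.2 from the other points of its fiber. *)
Lemma separating_functional (Q : seq (pt K)) P0 : uniq Q -> P0 \in Q ->
  all adapted Q -> (count (same_base P0) Q <= k.+1)%N ->
  exists e : 'cV_n, forall P, P \in Q -> ((eval_row P *m e) 0 0 == 0) = (P != P0).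
Proof.
move=> uQ P0Q /allP aQ cQ.
have /and3P [/and3P [_ _ nc0] a0 b0] := aQ P0 P0Q.
have [f1 hf1] := bform_separating uU1 nU1 a0 (eq_leq sU1).
have [f2 hf2] := bform_separating uU2 nU2 b0 (eq_leq sU2).
set F := filter (same_base P0) Q.
have FP P : P \in F = (P \in Q) && (P.1 == P0.1) by rewrite mem_filter andbC.
have uF : uniq (map snd F).
  rewrite map_inj_in_uniq ?filter_uniq // => P P'; rewrite !FP.
  case/andP=> _ /eqP e /andP [_ /eqP e'] e2.
  by rewrite [P]surjective_pairing [P']surjective_pairing e e' e2.
have nF : {in map snd F, forall u, pnormal u}.
  by move=> u /mapP [P]; rewrite FP => /andP [/aQ /and3P [/and3P [_ _ ?] _ _] _] ->.
have c0F : P0.2 \in map snd F by apply: map_f; rewrite FP P0Q eqxx.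
have sF : (size (map snd F) <= k.+1)%N by rewrite size_map size_filter.
have [f3 hf3] := bform_separating uF nF c0F sF.
exists (\col_c tensor3 f1 f2 f3 (enum_val c)) => P PQ.
have /and3P [_ aP bP] := aQ P PQ.
rewrite eval_row_mul_col sum_mon_eval_tensor !mulf_eq0 hf1 // hf2 //.
have [e1|ne] := eqVneq P.1.1 P0.1.1; last by apply/esym; apply: contraNneq ne => ->.
have [e2|ne] := eqVneq P.1.2 P0.1.2; last by apply/esym; apply: contraNneq ne => ->.
have e : P.1 = P0.1 by rewrite [P.1]surjective_pairing e1 e2 -surjective_pairing.
rewrite /= hf3; last by apply: map_f; rewrite FP PQ e eqxx.
by rewrite [P]surjective_pairing [P0]surjective_pairing e xpair_eqE eqxx.
Qed.

Variable Y : seq (pt K).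
Hypotheses (uY : uniq Y) (aY : all adapted Y).

Definition in_fiber_heads P := (index P (filter (same_base P) Y) < k.+1)%N.
Definition fiber_heads := filter in_fiber_heads Y.

Lemma fiber_heads_sub : {subset fiber_heads <= Y}.
Proof. by move=> P; rewrite mem_filter => /andP []. Qed.

Lemma count_fiber_heads P0 : count (same_base P0) fiber_heads = minn k.+1 (count (same_base P0) Y).
Proof.
rewrite -[in RHS]size_filter -(count_index _ (filter_uniq _ uY)) /fiber_heads !count_filter.
apply: eq_count => P /=; rewrite /in_fiber_heads.
have [/eqP e|] := boolP (same_base P0 P); rewrite ?andbF ?andbT //.
by congr (index _ _ < _)%N; apply: eq_filter => x; rewrite /same_base e.
Qed.

Lemma rank_fiber_heads : \rank (eval_mx fiber_heads) = size fiber_heads.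
Proof.
apply/eqP/row_free_separated => r.
have uT : uniq fiber_heads := filter_uniq _ uY.
have rT : nth pt0 fiber_heads r \in fiber_heads by apply: mem_nth.
have aT : all adapted fiber_heads by apply/allP => P /fiber_heads_sub /(allP aY).
have cT : (count (same_base (nth pt0 fiber_heads r)) fiber_heads <= k.+1)%N.
  by rewrite count_fiber_heads geq_minl.
have [e He] := separating_functional uT rT aT cT.
by exists e => r'; rewrite rowK He ?mem_nth // nth_uniq.
Qed.

Lemma eval_mx_sub_fiber_heads : (eval_mx Y <= eval_mx fiber_heads)%MS.
Proof.
apply/row_subP => r; rewrite rowK.
set P := nth pt0 Y r; have PY : P \in Y by apply: mem_nth.
have [PT|PT] := boolP (P \in fiber_heads); first exact: eval_row_sub.
set L := filter (same_base P) Y.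
have PL : P \in L by rewrite mem_filter /same_base eqxx.
have iL : (k.+1 <= index P L)%N by move: PT; rewrite mem_filter PY andbT -leqNgt.
have sL : (k.+1 < size L)%N by rewrite (leq_ltn_trans iL) ?index_mem.
have LP P' : P' \in L -> P' \in Y /\ P'.1 = P.1.
  by rewrite mem_filter /same_base => /andP [/eqP].
apply: (@eval_row_sub_fiber _ (take k.+1 L)); first by rewrite size_take sL.
- rewrite map_inj_in_uniq ?take_uniq ?filter_uniq // => x y /mem_take/LP [_ ex].
  move=> /mem_take/LP [_ ey] exy.
  by rewrite [x]surjective_pairing [y]surjective_pairing ex ey exy.
- move=> x /mem_take/LP [/(allP aY)/and3P [/and3P [_ _ nx] _ _] ex]; split=> //.
- move=> x xT; have [xY ex] := LP x (mem_take xT).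
  rewrite mem_filter xY andbT /in_fiber_heads.
  have -> : filter (same_base x) Y = L by apply: eq_filter => z; rewrite /same_base ex.
  exact: index_ltn.
Qed.

Lemma rank_eval_mx : \rank (eval_mx Y) = \sum_(b <- bases Y) minn k.+1 (fiber_size Y b).
Proof.
have -> : \rank (eval_mx Y) = \rank (eval_mx fiber_heads).
  apply/eqP; rewrite eqn_leq !mxrankS ?eval_mx_sub_fiber_heads ?eval_mxS //.
  exact: fiber_heads_sub.
rewrite rank_fiber_heads (@size_sum_count _ _ fst (bases Y)) ?undup_uniq //; last first.
  by move=> b /mapP [P /fiber_heads_sub PY ->]; rewrite mem_undup map_f.
apply: eq_big_seq => b; rewrite mem_undup => /mapP [P0 _ ->].
exact: (count_fiber_heads P0).
Qed.

End EvaluationRank.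

Section HilbertFunction.
Variables (K : fieldType) (X : seq (pt K)).
Hypothesis vX : all (@valid_pt K) X.

Lemma ffun_row_mul_eval_mx_tr i j k (Y : seq (pt K)) (v : {ffun mon_idx i j k -> K^o}) r :
  (ffun_row v *m (eval_mx i j k Y)^T) 0 r = form_eval (nth (pt0 K) Y r) v.
Proof.
rewrite mxE /form_eval [RHS](reindex (fun c : 'I_#|mon_idx i j k| => enum_val c)) /=.
  by apply: eq_bigr => c _; rewrite !mxE.
by exists (fun t => enum_rank t) => t _; rewrite ?enum_rankK ?enum_valK.
Qed.

Lemma in_IX_eval_mx i j k (v : {ffun mon_idx i j k -> K^o}) :
  in_IX X (poly_of v) <-> ffun_row v *m (eval_mx i j k (map (@pt_pnorm K) X))^T = 0.
Proof.
have vP P : P \in X -> valid_pt P by apply: (allP vX).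
split=> [IXv | /rowP v0 P PX].
  apply/rowP => r; rewrite ffun_row_mul_eval_mx_tr mxE.
  have rX : (r < size X)%N by apply: (leq_trans (ltn_ord r)); rewrite size_map.
  rewrite (nth_map (pt0 K)) //; apply/eqP.
  have PX : nth (pt0 K) X r \in X by apply: mem_nth.
  by rewrite -form_eval_pt_pnorm_eq0 ?vP //; apply/eqP/in_IP_poly_of; [apply: vP | apply: IXv].
apply/(in_IP_poly_of _ (vP P PX))/eqP; rewrite form_eval_pt_pnorm_eq0 ?vP //.
have iP : (index P X < size (map (@pt_pnorm K) X))%N by rewrite size_map index_mem.
move: (v0 (Ordinal iP)); rewrite ffun_row_mul_eval_mx_tr mxE /=.
by rewrite (nth_map (pt0 K)) ?index_mem // nth_index // => ->.
Qed.

Lemma HX_rank i j k : HX X i j k = \rank (eval_mx i j k (map (@pt_pnorm K) X)).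
Proof.
rewrite /HX (@sdim_rank _ _ _ _ (1%:M : 'M_#|mon_idx i j k|)); last by move=> v; rewrite submx1.
rewrite (@sdim_rank _ _ _ _ (kermx (eval_mx i j k (map (@pt_pnorm K) X))^T)); last first.
  by move=> v; rewrite sub_kermx; apply: iff_trans (in_IX_eval_mx _) (rwP eqP).
by rewrite mxrank1 mxrank_ker mxrank_tr subKn // rank_leq_col.
Qed.

End HilbertFunction.

Section Lines.
Variable K : fieldType.
Implicit Types (u : K * K) (l : line K) (b : (K * K) * (K * K)) (P : pt K).

Definition root_of u : K * K := (- u.2, u.1).
Definition line_base l := (pnorm (root_of l.1), pnorm (root_of l.2)).
Definition line_of_base b : line K := (annih b.1, annih b.2).

Lemma annih_root_of u : annih (root_of u) = u.
Proof. by rewrite /annih /root_of /= opprK; case: u. Qed.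

Lemma root_of_annih u : root_of (annih u) = u.
Proof. by rewrite /annih /root_of /= opprK; case: u. Qed.

Lemma root_of_nz u : nz u -> nz (root_of u).
Proof. by rewrite /nz /= oppr_eq0 orbC. Qed.

Lemma lform_eq0_pnorm u a : nz u -> nz a ->
  (lform u a == 0) = (pnorm a == pnorm (root_of u)).
Proof. by move=> nu na; rewrite -{1}[u]annih_root_of lform_annih_eq0 proj_eq_pnorm ?root_of_nz. Qed.

Lemma on_line_pnorm l P : valid_line l -> valid_pt P ->
  on_line l P = ((pt_pnorm P).1 == line_base l).
Proof.
case/andP=> n1 n2 /and3P [na nb _].
have -> : on_line l P = (lform l.1 P.1.1 == 0) && (lform l.2 P.1.2 == 0) by [].
by rewrite !lform_eq0_pnorm.
Qed.

Lemma same_line_base l l' : valid_line l -> valid_line l' ->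
  same_line l l' = (line_base l == line_base l').
Proof.
case/andP=> n1 n2 /andP [n1' n2'].
have root_proj u v : proj_eq u v = proj_eq (root_of u) (root_of v).
  by rewrite -[RHS]proj_eq_annih !annih_root_of.
by rewrite /same_line !(root_proj l.1) !(root_proj l.2) !proj_eq_pnorm ?root_of_nz.
Qed.

Lemma line_of_base_valid b : nz b.1 -> nz b.2 -> valid_line (line_of_base b).
Proof. by move=> n1 n2; rewrite /valid_line !annih_nz. Qed.

Lemma line_base_of b : pnormal b.1 -> pnormal b.2 -> line_base (line_of_base b) = b.
Proof. by rewrite /line_base /= !root_of_annih => /eqP -> /eqP ->; case: b. Qed.

Variable X : seq (pt K).
Hypothesis vX : all (@valid_pt K) X.
Let Y := map (@pt_pnorm K) X.

Lemma npts_line_of_base b : pnormal b.1 -> pnormal b.2 ->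
  npts X (line_of_base b) = fiber_size Y b.
Proof.
move=> n1 n2; rewrite /npts /fiber_size count_map; apply: eq_in_count => P PX /=.
by rewrite on_line_pnorm ?line_base_of ?line_of_base_valid ?pnormal_nz ?(allP vX).
Qed.

Lemma r_is_fiber_count k :
  r_is X k.+1 (count (fun b => fiber_size Y b == k.+1) (bases Y)).
Proof.
have nB b : b \in bases Y -> pnormal b.1 && pnormal b.2.
  by rewrite mem_undup => /mapP [_ /mapP [P _ ->] ->]; rewrite !pnorm_pnormal.
exists (map line_of_base [seq b <- bases Y | fiber_size Y b == k.+1]); split.
- by rewrite size_map size_filter.
- apply/allP => L /mapP [b]; rewrite mem_filter => /andP [/eqP cb /nB /andP [n1 n2]] ->.
  by rewrite line_of_base_valid ?pnormal_nz //= npts_line_of_base ?cb.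
- rewrite pairwise_map.
  apply: (@sub_in_pairwise _ [pred b | pnormal b.1 && pnormal b.2] [rel b b' | b != b']).
  + move=> b b' /andP [n1 n2] /andP [n1' n2'] /=; apply: contra.
    by rewrite same_line_base ?line_of_base_valid ?pnormal_nz // !line_base_of.
  + by apply/allP => b; rewrite mem_filter => /andP [_ /nB].
  + by apply: pairwise_filter; rewrite -uniq_pairwise undup_uniq.
move=> l vl nl; have /hasP [P PX onP] : has (on_line l) X by rewrite has_count -/(npts X l) nl.
have vP : valid_pt P by apply: (allP vX).
have eb : (pt_pnorm P).1 = line_base l by apply/eqP; rewrite -on_line_pnorm.
have bY : line_base l \in bases Y by rewrite -eb mem_undup !map_f.
apply/hasP; exists (line_of_base (line_base l)).
  apply: map_f; rewrite mem_filter bY andbT -nl /npts /fiber_size count_map.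
  by apply/eqP/eq_in_count => Q QX /=; rewrite on_line_pnorm ?(allP vX).
have /andP [n1 n2] := nB _ bY.
by rewrite same_line_base ?line_of_base_valid ?pnormal_nz // line_base_of.
Qed.

End Lines.

Section DistinctPoints.
Variables (K : fieldType) (X : seq (pt K)).
Hypotheses (vX : all (@valid_pt K) X) (dX : pairwise (fun P Q => ~~ pt_eq P Q) X).
Let Y := map (@pt_pnorm K) X.

Lemma uniq_pt_pnorm : uniq Y.
Proof.
rewrite uniq_pairwise pairwise_map.
apply: (sub_in_pairwise (P := [pred P | valid_pt P])) dX => //.
move=> P Q /and3P [na nb nc] /and3P [na' nb' nc'] /=; apply: contra => /eqP.
by case=> e1 e2 e3; rewrite /pt_eq !proj_eq_pnorm // e1 e2 e3 !eqxx.
Qed.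

Lemma card_pi1_pnorm : card_pi1 X = size (undup (map (fun P => P.1.1) Y)).
Proof.
rewrite /card_pi1 ncls_pnorm -?map_comp //.
by apply/allP => _ /mapP [P /(allP vX) /and3P [] ? _ _ ->].
Qed.

Lemma card_pi2_pnorm : card_pi2 X = size (undup (map (fun P => P.1.2) Y)).
Proof.
rewrite /card_pi2 ncls_pnorm -?map_comp //.
by apply/allP => _ /mapP [P /(allP vX) /and3P [] _ ? _ ->].
Qed.

Lemma HXz_fibers (c : nat) :
  HXz X ((card_pi1 X)%:Z - 1) ((card_pi2 X)%:Z - 1) (c%:Z - 1) =
  (\sum_(b <- bases Y) minn c (fiber_size Y b))%:Z.
Proof.
rewrite card_pi1_pnorm card_pi2_pnorm.
have [->|Y0] := eqVneq Y [::]; first by rewrite big_nil.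
set U1 := undup _; set U2 := undup _.
have nU1 : {in U1, forall u, pnormal u}.
  by move=> u; rewrite mem_undup => /mapP [_ /mapP [P _ ->] ->]; apply: pnorm_pnormal.
have nU2 : {in U2, forall u, pnormal u}.
  by move=> u; rewrite mem_undup => /mapP [_ /mapP [P _ ->] ->]; apply: pnorm_pnormal.
have aY : all (adapted U1 U2) Y.
  apply/allP => _ /mapP [P PX ->].
  have PY : pt_pnorm P \in Y := map_f _ PX.
  rewrite /adapted pt_pnorm_pnormal !mem_undup.
  by rewrite (map_f (fun Q => Q.1.1) PY) (map_f (fun Q => Q.1.2) PY).
have [i sU1] : exists i, size U1 = i.+1.
  by exists (size U1).-1; rewrite prednK ?undup_map_gt0.
have [j sU2] : exists j, size U2 = j.+1.
  by exists (size U2).-1; rewrite prednK ?undup_map_gt0.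
have pred_int n : n.+1%:Z - 1 = n%:Z by rewrite -addn1 PoszD addrK.
rewrite sU1 sU2 !pred_int; case: c => [|c]; first by rewrite big1 // => b _; rewrite min0n.
rewrite pred_int /= HX_rank //.
by rewrite (rank_eval_mx c (undup_uniq _) (undup_uniq _) sU1 sU2 nU1 nU2 uniq_pt_pnorm aY).
Qed.

End DistinctPoints.

Unset Implicit Arguments.
Set Strict Implicit.

Theorem theorem3p1 (K : closedFieldType) (hchar : [pchar K] =i pred0)
  (X : seq (pt K)) (hX : all (@valid_pt K) X)
  (hdist : pairwise (fun P Q => ~~ pt_eq P Q) X) (k : nat) :
  let t1 := card_pi1 X in
  let t2 := card_pi2 X in
  let H := fun c : int => HXz X (t1%:Z - 1) (t2%:Z - 1) c in
  let d := fun c : int => H c - H (c - 1) in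
  exists r : nat, r_is X k.+1 r /\
    r%:Z = d k%:Z - d (k%:Z + 1) /\
    r%:Z = 2 * H k%:Z - H (k%:Z - 1) - H (k%:Z + 1).
Proof.
move=> t1 t2 H d.
set Y := map (@pt_pnorm K) X.
have HS c : H (c%:Z - 1) = (\sum_(b <- bases Y) minn c (fiber_size Y b))%:Z.
  exact: HXz_fibers.
have Hk : H k%:Z = (\sum_(b <- bases Y) minn k.+1 (fiber_size Y b))%:Z.
  by rewrite -HS -addn1 PoszD addrK.
have Hk1 : H (k%:Z + 1) = (\sum_(b <- bases Y) minn k.+2 (fiber_size Y b))%:Z.
  by rewrite -HS -addn2 PoszD -addrA.
exists (count (fun b => fiber_size Y b == k.+1) (bases Y)).
split; first exact: r_is_fiber_count.
by rewrite /d addrK Hk Hk1 HS count_eq_minn_second_difference; split; lia.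
Qed.
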